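(* For every integer $n\ge 2$, the free algebra on $n$ generators of the variety $\mathbb{V}(\mathbb{X}_n^\ast)$ generated by the Heyting algebra $\mathbb{X}_n^\ast$ is finite.
   Context: $\mathbb{N}=\{0,1,2,\dots\}$. Fix an integer $n\ge 2$ and put $N=2^{n+1}-1$. Let $T_n$ be the set of triples $\langle k_1,k_2,k_3\rangle$ of pairwise distinct natural numbers $\le N$, with a fixed enumeration $T_n=\{s_0,\dots,s_t\}$. Let $U_n$ be a set of pairwise distinct elements $a_m,b_m$ ($m\in\mathbb{N}$) and $c_{m,k},d_{m,k},e^a_{m,k},e^b_{m,k}$ ($m\in\mathbb{N}$, $0\le k\le N$). Define $x\prec y$ on $U_n$ iff one of: (1) $x=a_m$ and $y\in\{c_{m,k_1},c_{m,k_2}\}$, where $s_j=\langle k_1,k_2,k_3\rangle$ with $j\equiv m \bmod (t+1)$; (2) $x=b_m$ and $y\in\{c_{m,k_1},c_{m,k_3}\}$, with $s_j$ as in (1); (3) $m\ge1$, $x=c_{m,k}$, and either $y=e^a_{m-1,j}$ with $j\ne k$, or $y=e^b_{m-1,i}$ for any $i\le N$; (4) $x=d_{m,k}$ and $y=c_{m,j}$ with $j\neq k$; (5) $x=e^a_{m,k}$ and either $y=a_m$ or $y=d_{m,j}$ with $j\ne k$; (6) $x=e^b_{m,k}$ and either $y=b_m$ or $y=d_{m,j}$ with $j\ne k$. Let $\le$ be the reflexive transitive closure of $\prec$. The $n$-abomination $\mathbb{X}_n$ is the poset $U_n\cup\{\bot\}$ where $\bot$ is a new least element, with the topology in which $U$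 is open iff $\bot\notin U$ or $U$ is cofinite; it is an Esakia space. $\mathbb{X}_n^\ast$ denotes its Esakia dual, the Heyting algebra of clopen upsets of $\mathbb{X}_n$ (with intersection, union, $0=\emptyset$, $1=X_n$, and $U\to V=X_n\setminus{\downarrow}(U\setminus V)$). *)

From Stdlib Require Import Relations.
From Stdlib Require List.
From mathcomp Require Import all_boot.
Set Implicit Arguments. Unset Strict Implicit. Unset Printing Implicit Defensive.

Definition NN (n : nat) : nat := 2 ^ n.+1 - 1.

(* triples <k1,k2,k3> encoded as ((k1,k2),k3) *)
Definition is_triple (n : nat) (tr : nat * nat * nat) : bool :=
  let '(k1, k2, k3) := tr in
  [&& k1 != k2, k1 != k3, k2 != k3, k1 <= NN n, k2 <= NN n & k3 <= NN n].

(* s = [:: s_0; ...; s_t] is an enumeration of T_n (without repetition) *)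
Definition enumeration (n : nat) (s : seq (nat * nat * nat)) : Prop :=
  uniq s /\ forall tr, (tr \in s) = is_triple n tr.

Definition sel (s : seq (nat * nat * nat)) (m : nat) : nat * nat * nat :=
  nth (0, 0, 0) s (m %% size s).

(* Points of X_n = U_n ∪ {⊥}; indices k range over 0..N, i.e. 'I_(2^(n+1)). *)
Inductive pt (n : nat) : Type :=
| Bot
| A of nat
| B of nat
| C of nat & 'I_(2 ^ n.+1)
| D of nat & 'I_(2 ^ n.+1)
| EA of nat & 'I_(2 ^ n.+1)
| EB of nat & 'I_(2 ^ n.+1).
Arguments Bot {n}.

Inductive prec (n : nat) (s : seq (nat * nat * nat)) : pt n -> pt n -> Prop :=
| prec_a1 m k : nat_of_ord k = (sel s m).1.1 -> prec s (A n m) (C m k)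
| prec_a2 m k : nat_of_ord k = (sel s m).1.2 -> prec s (A n m) (C m k)
| prec_b1 m k : nat_of_ord k = (sel s m).1.1 -> prec s (B n m) (C m k)
| prec_b3 m k : nat_of_ord k = (sel s m).2 -> prec s (B n m) (C m k)
| prec_cea m k j : j != k -> prec s (C m.+1 k) (EA m j)
| prec_ceb m k i : prec s (C m.+1 k) (EB m i)
| prec_dc m k j : j != k -> prec s (D m k) (C m j)
| prec_eaa m k : prec s (EA m k) (A n m)
| prec_ead m k j : j != k -> prec s (EA m k) (D m j)
| prec_ebb m k : prec s (EB m k) (B n m)
| prec_ebd m k j : j != k -> prec s (EB m k) (D m j).

Definition le (n : nat) (s : seq (nat * nat * nat)) (x y : pt n) : Prop :=
  x = Bot \/ clos_refl_trans (pt n) (prec s) x y.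

Definition cofinite (n : nat) (U : pt n -> Prop) : Prop :=
  exists l : list (pt n), forall x, ~ U x -> List.In x l.

Definition is_open (n : nat) (U : pt n -> Prop) : Prop := ~ U Bot \/ cofinite U.

Definition is_clopen (n : nat) (U : pt n -> Prop) : Prop :=
  is_open U /\ is_open (fun x => ~ U x).

Definition is_upset (n : nat) (s : seq (nat * nat * nat)) (U : pt n -> Prop) : Prop :=
  forall x y, le s x y -> U x -> U y.

(* elements of the dual Heyting algebra X_n^dual *)
Definition clopen_upset (n : nat) (s : seq (nat * nat * nat)) (U : pt n -> Prop) : Prop :=
  is_clopen U /\ is_upset s U.

Inductive hterm (k : nat) : Type :=
| TVar of 'I_k
| TBot
| TTop
| TMeet of hterm k & hterm k
| TJoin of hterm k & hterm k
| TImp of hterm k & hterm k.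
Arguments TBot {k}.
Arguments TTop {k}.

(* evaluation of terms in X_n^dual : ∩, ∪, ∅, X_n, U → V = X_n \ ↓(U \ V) *)
Fixpoint eval (n k : nat) (s : seq (nat * nat * nat)) (v : 'I_k -> pt n -> Prop)
  (t : hterm k) : pt n -> Prop :=
  match t with
  | TVar i => v i
  | TBot => fun _ => False
  | TTop => fun _ => True
  | TMeet t1 t2 => fun x => eval s v t1 x /\ eval s v t2 x
  | TJoin t1 t2 => fun x => eval s v t1 x \/ eval s v t2 x
  | TImp t1 t2 => fun x =>
      ~ (exists y, (eval s v t1 y /\ ~ eval s v t2 y) /\ le s x y)
  end.

Definition term_equiv (n k : nat) (s : seq (nat * nat * nat)) (t u : hterm k) : Prop :=
  forall v : 'I_k -> pt n -> Prop, (forall i, clopen_upset s (v i)) ->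
  forall x, eval s v t x <-> eval s v u x.

(* The free k-generated algebra of V(X_n^dual) is the term algebra modulo the
   identities of X_n^dual; it is finite iff finitely many classes exist. *)
Definition free_algebra_finite (n k : nat) (s : seq (nat * nat * nat)) : Prop :=
  exists l : list (hterm k), forall t : hterm k,
    exists u, List.In u l /\ @term_equiv n k s t u.

From Stdlib Require Import Relations Classical ClassicalEpsilon.
From mathcomp Require Import all_boot zify.
Set Implicit Arguments. Unset Strict Implicit. Unset Printing Implicit Defensive.

(* Up to bisimulation, every point of X_n lies in a set of representatives whose size is
   bounded independently of the valuation, and a term function is determined by its values
   on a finite Kripke model of bounded size; hence there are finitely many term functions.
   Let the n generators be valued by upsets.  On the zigzag C_m k, D_m k, EA_m k,
   C_(m+1) k, ... of index k an upset is determined by its value at its first incomplete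
   level, so two of the 2^(n+1) > 2^n indices, k and k', carry the same colours, and
   swapping them is a bisimulation.
   The triple <_, k, k'> occurs in the enumeration, so every t+1 consecutive layers contain
   an m with C_m k2 ~ C_m k3, whence A_m ~ B_m and EA_m j ~ EB_m j.  Now if all points in
   the t+1 layers just above a point x have the colour of x, these bisimilarities make all
   points of that colour further down bisimilar to each other; otherwise some generator
   changes value there, and x lies within t+3 layers of that generator's boundary. *)

Definition truth (P : Prop) : bool := if excluded_middle_informative P then true else false.

Lemma truthP (P : Prop) : reflect P (truth P).
Proof. by rewrite /truth; case: excluded_middle_informative => h; constructor. Qed.

Lemma eq_truth (P Q : Prop) : truth P = truth Q <-> (P <-> Q).
Proof.
split=> [e|PQ]; first by split=> p; apply/truthP; [rewrite -e|rewrite e]; apply/truthP.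
by case: truthP => p; case: truthP => q //; [case: q; apply/PQ|case: p; apply/PQ].
Qed.

Definition least_witness (Q : nat -> Prop) : nat :=
  epsilon (inhabits 0) (fun q => Q q /\ forall q', Q q' -> q <= q').

Lemma least_witnessP (Q : nat -> Prop) : (exists q, Q q) ->
  Q (least_witness Q) /\ forall q', Q q' -> least_witness Q <= q'.
Proof.
move=> [q0 Qq0]; apply: (epsilon_spec _ (fun q => Q q /\ forall q', Q q' -> q <= q')).
have hex : exists q, truth (Q q) by exists q0; apply/truthP.
have [q /truthP Qq qmin] := ex_minnP hex.
by exists q; split=> // q' /truthP; apply: qmin.
Qed.

Lemma exists_mod_in_window a N r : r < N -> exists m, a <= m < a + N /\ m %% N = r.
Proof.
move=> rN; elim: a => [|a [m [/andP [am ma] mr]]].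
  by exists r; rewrite modn_small // add0n rN.
case: (eqVneq m a) => [ema|nema].
  by exists (a + N); rewrite modnDr -ema mr; split=> //; apply/andP; lia.
by exists m; split=> //; apply/andP; lia.
Qed.

Lemma exists_ord_neq2 m (a b : 'I_m) : 2 < m -> exists c : 'I_m, (c != a) && (c != b).
Proof.
move=> m_gt2; have /subsetPn [c _] : ~~ ([set: 'I_m] \subset [set a; b]).
  apply/negP => /subset_leq_card; rewrite cardsT card_ord cards2.
  by case: (a != b); rewrite leqNgt ?m_gt2 // (ltnW m_gt2).
by rewrite !inE negb_or => cab; exists c.
Qed.

Section KripkeSemantics.
Variables (X : Type) (R : X -> X -> Prop) (k : nat).
Implicit Types (v : 'I_k -> X -> Prop) (t : hterm k) (x y : X).

Fixpoint heval v t : X -> Prop :=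
  match t with
  | TVar i => v i
  | TBot => fun _ => False
  | TTop => fun _ => True
  | TMeet t1 t2 => fun x => heval v t1 x /\ heval v t2 x
  | TJoin t1 t2 => fun x => heval v t1 x \/ heval v t2 x
  | TImp t1 t2 => fun x => ~ (exists y, (heval v t1 y /\ ~ heval v t2 y) /\ R x y)
  end.

Definition same_colour v x y := forall i, v i x <-> v i y.

Definition bisimulation v (Z : X -> X -> Prop) := forall x y, Z x y ->
  [/\ same_colour v x y,
      forall x1, R x x1 -> exists y1, R y y1 /\ Z x1 y1
    & forall y1, R y y1 -> exists x1, R x x1 /\ Z x1 y1].

Definition bisimilar v x y := exists Z, bisimulation v Z /\ Z x y.

Lemma bisimulation_of_sym v (Z : X -> X -> Prop) : (forall x y, Z x y -> Z y x) ->
  (forall x y, Z x y -> same_colour v x y /\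
     forall x1, R x x1 -> exists y1, R y y1 /\ Z x1 y1) ->
  bisimulation v Z.
Proof.
move=> Zsym Zforth x y xZy; have [col forth] := Zforth x y xZy; split=> // y1 yRy1.
have [x1 [xRx1 /Zsym x1Zy1]] := (Zforth y x (Zsym _ _ xZy)).2 y1 yRy1.
by exists x1.
Qed.

Lemma bisimilar_bisimulation v : bisimulation v (bisimilar v).
Proof.
move=> x y [Z [bisZ xZy]]; have [col forth back] := bisZ x y xZy; split=> //.
- by move=> x1 /forth [y1 [yRy1 x1Zy1]]; exists y1; split=> //; exists Z.
- by move=> y1 /back [x1 [xRx1 x1Zy1]]; exists x1; split=> //; exists Z.
Qed.

Lemma bisimilar_refl v x : bisimilar v x x.
Proof.
by exists eq; split=> // a b <-; split=> // a1 aRa1; exists a1.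
Qed.

Lemma bisimilar_sym v x y : bisimilar v x y -> bisimilar v y x.
Proof.
move=> [Z [bisZ xZy]]; exists (fun a b => Z b a); split=> // a b bZa.
have [col forth back] := bisZ b a bZa; split=> // i; exact: iff_sym.
Qed.

Lemma heval_bisimilar v t x y : bisimilar v x y -> heval v t x <-> heval v t y.
Proof.
elim: t x y => [i|||t1 IH1 t2 IH2|t1 IH1 t2 IH2|t1 IH1 t2 IH2] x y xy /=.
- by have [] := bisimilar_bisimulation xy.
- by [].
- by [].
- by rewrite (IH1 _ _ xy) (IH2 _ _ xy).
- by rewrite (IH1 _ _ xy) (IH2 _ _ xy).
- have [_ forth back] := bisimilar_bisimulation xy.
  split=> noy [z [[z1 z2] Rz]].
  + have [x1 [xRx1 x1z]] := back _ Rz; apply: noy; exists x1.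
    by rewrite (IH1 _ _ x1z) (IH2 _ _ x1z).
  + have [y1 [yRy1 zy1]] := forth _ Rz; apply: noy; exists y1.
    by rewrite -(IH1 _ _ zy1) -(IH2 _ _ zy1).
Qed.

Section FiniteCover.
Variable I : finType.

Definition finite_model : finType := ({ffun I * I -> bool} * {ffun I * 'I_k -> bool})%type.

Fixpoint fm_eval (c : finite_model) t (i : I) : bool :=
  match t with
  | TVar g => c.2 (i, g)
  | TBot => false
  | TTop => true
  | TMeet t1 t2 => fm_eval c t1 i && fm_eval c t2 i
  | TJoin t1 t2 => fm_eval c t1 i || fm_eval c t2 i
  | TImp t1 t2 => [forall j, c.1 (i, j) ==> (fm_eval c t1 j ==> fm_eval c t2 j)]
  end.

Definition induced_model v (r : I -> X) : finite_model :=
  ([ffun ij : I * I => truth (exists y, R (r ij.1) y /\ bisimilar v y (r ij.2))],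
   [ffun ig : I * 'I_k => truth (v ig.2 (r ig.1))]).

Lemma fm_eval_induced_model v (r : I -> X) : (forall x, exists i, bisimilar v x (r i)) ->
  forall t i, fm_eval (induced_model v r) t i <-> heval v t (r i).
Proof.
move=> cover; elim=> [g|||t1 IH1 t2 IH2|t1 IH1 t2 IH2|t1 IH1 t2 IH2] i /=.
- by rewrite ffunE; split=> /truthP.
- by [].
- by [].
- by rewrite -IH1 -IH2; split=> /andP.
- by rewrite -IH1 -IH2; split=> /orP.
- split.
  + move=> /forallP sees [y [[y1 y2] Ry]]; have [j yj] := cover y.
    have /implyP := sees j; rewrite ffunE.
    have -> : truth (exists y, R (r i) y /\ bisimilar v y (r j)) by apply/truthP; exists y.
    move=> /(_ isT) /implyP; rewrite IH1 IH2 -!(heval_bisimilar _ yj) => /(_ y1).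
    exact: y2.
  + move=> noy; apply/forallP => j; apply/implyP; rewrite ffunE => /truthP [y [Ry yj]].
    apply/implyP; rewrite IH1 IH2 -!(heval_bisimilar _ yj) => y1.
    by apply: NNPP => y2; apply: noy; exists y.
Qed.

Lemma finite_term_quotient (adm : ('I_k -> X -> Prop) -> Prop) :
  (forall v, adm v -> exists r : I -> X, forall x, exists i, bisimilar v x (r i)) ->
  exists l : list (hterm k), forall t, exists u, List.In u l /\
    forall v, adm v -> forall x, heval v t x <-> heval v u x.
Proof.
move=> covers.
pose table t : {ffun finite_model -> {ffun I -> bool}} := [ffun c => [ffun i => fm_eval c t i]].
have same_table t u : table t = table u ->
    forall v, adm v -> forall x, heval v t x <-> heval v u x.
  move=> tu v /covers [r cover] x; have [i xi] := cover x.
  rewrite !(heval_bisimilar _ xi) -!(fm_eval_induced_model cover).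
  have /ffunP/(_ (induced_model v r)) := tu; rewrite !ffunE => /ffunP/(_ i).
  by rewrite !ffunE => ->.
have [pick pickP] : exists pick : {ffun finite_model -> {ffun I -> bool}} -> hterm k,
    forall f, (exists t, table t = f) -> table (pick f) = f.
  exists (fun f => epsilon (inhabits TBot) (fun t => table t = f)) => f.
  exact: epsilon_spec.
exists (List.map pick (enum {ffun finite_model -> {ffun I -> bool}})) => t.
exists (pick (table t)); split; last by apply: same_table; rewrite pickP //; exists t.
apply: List.in_map; elim: (enum _) (mem_enum predT (table t)) => //= a l IH.
by rewrite in_cons => /orP [/eqP ->|/IH]; [left|right].
Qed.

End FiniteCover.
End KripkeSemantics.

Section Abomination.
Variables (n : nat) (s : seq (nat * nat * nat)).
Hypotheses (n_gt0 : 0 < n) (s_enum : enumeration n s).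

Local Notation K := (2 ^ n.+1).
Local Notation P := (pt n).
Local Notation prec := (@prec n s).
Local Notation le := (@le n s).
Local Notation valuation := ('I_n -> P -> Prop).
Implicit Types (x y z : P) (m q : nat) (j k : 'I_K) (v : valuation).

Definition layer x : nat :=
  match x with Bot => 0 | A m | B m | C m _ | D m _ | EA m _ | EB m _ => m end.

Definition sublevel x : nat :=
  match x with Bot | C _ _ => 0 | A _ | B _ | D _ _ => 1 | EA _ _ | EB _ _ => 2 end.

Definition level x := 3 * layer x + sublevel x.

Lemma prec_level x y : prec x y -> level y < level x.
Proof. by case=> * /=; rewrite /level /=; lia. Qed.

Lemma le_refl x : le x x.
Proof. by right; apply: rt_refl. Qed.

Lemma prec_le x y : prec x y -> le x y.
Proof. by right; apply: rt_step. Qed.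

Lemma rt_prec_neq_Bot x y : clos_refl_trans P prec x y -> x <> Bot -> y <> Bot.
Proof. by elim=> [a b []|a|a b c _ ab _ bc] //; auto. Qed.

Lemma le_neq_Bot x y : le x y -> x <> Bot -> y <> Bot.
Proof. by case=> // /rt_prec_neq_Bot. Qed.

Lemma le_trans x y z : le x y -> le y z -> le x z.
Proof.
case=> [->|xy]; first by left.
case=> [yB|yz]; last by right; apply: rt_trans xy yz.
by case: (classic (x = Bot)) => [->|/(rt_prec_neq_Bot xy)]; [left|].
Qed.

Lemma prec_le_trans x y z : prec x y -> le y z -> le x z.
Proof. by move/prec_le; apply: le_trans. Qed.

Lemma le_level x y : le x y -> x <> Bot -> x = y \/ level y < level x.
Proof.
move=> [->//|+] _; elim=> [a b /prec_level|a|a b c _ [<-|ab] _ [<-|bc]]; auto.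
by right; apply: ltn_trans ab.
Qed.

Lemma le_first x y : le x y -> x <> Bot -> x = y \/ exists2 z, prec x z & le z y.
Proof.
move=> [->//|/clos_rt_rt1n_iff xy] _.
case: xy => [|a b xa /clos_rt_rt1n_iff ab]; first by left.
by right; exists a => //; right.
Qed.

Lemma K_gt2 : 2 < K.
Proof. by rewrite (@leq_trans (2 ^ 2)) // leq_exp2l. Qed.

Lemma fresh1 (a : 'I_K) : exists b : 'I_K, b != a.
Proof. by have [b /andP []] := exists_ord_neq2 a a K_gt2; exists b. Qed.

Lemma fresh2 (a b : 'I_K) : exists c : 'I_K, (c != a) && (c != b).
Proof. exact: exists_ord_neq2 K_gt2. Qed.

Lemma fresh_pair (a : 'I_K) : exists b c : 'I_K, [&& b != a, c != a & b != c].
Proof.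
have [b ba] := fresh1 a; have [c /andP [ca cb]] := fresh2 a b.
by exists b, c; rewrite ba ca eq_sym cb.
Qed.

Lemma is_triple_ord (a b c : 'I_K) : [&& a != b, a != c & b != c] ->
  is_triple n (val a, val b, val c).
Proof.
rewrite /is_triple /NN -!val_eqE => /and3P [-> -> ->] /=.
by have := ltn_ord a; have := ltn_ord b; have := ltn_ord c; lia.
Qed.

Lemma size_s_gt0 : 0 < size s.
Proof.
have [b [c /and3P [ba ca bc]]] := fresh_pair (Ordinal (ltnW K_gt2)).
have : is_triple n (val (Ordinal (ltnW K_gt2)), val b, val c).
  by apply: is_triple_ord; rewrite !(eq_sym (Ordinal _)) ba ca bc.
by rewrite -s_enum.2; case: s.
Qed.

Lemma sel_triple m : is_triple n (sel s m).
Proof. by rewrite -s_enum.2 mem_nth // ltn_pmod // size_s_gt0. Qed.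

Definition ord_of (i : nat) : 'I_K := insubd (Ordinal (ltnW K_gt2)) i.

Definition k1 m := ord_of (sel s m).1.1.
Definition k2 m := ord_of (sel s m).1.2.
Definition k3 m := ord_of (sel s m).2.

Lemma k_vals m : [/\ val (k1 m) = (sel s m).1.1, val (k2 m) = (sel s m).1.2,
  val (k3 m) = (sel s m).2, k1 m != k2 m & k1 m != k3 m].
Proof.
have := sel_triple m; rewrite /k1 /k2 /k3 /ord_of /is_triple /NN -!val_eqE.
case: (sel s m) => [[a b] c] /and3P [ab ac /and4P [_ aK bK cK]] /=.
have ltK i : i <= 2 ^ n.+1 - 1 -> i < K by have := ltnW K_gt2; lia.
by rewrite !insubdK; [split|exact: ltK..].
Qed.

Lemma precA1 m : prec (A n m) (C m (k1 m)).
Proof. by apply: prec_a1; case: (k_vals m). Qed.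
Lemma precA2 m : prec (A n m) (C m (k2 m)).
Proof. by apply: prec_a2; case: (k_vals m). Qed.
Lemma precB1 m : prec (B n m) (C m (k1 m)).
Proof. by apply: prec_b1; case: (k_vals m). Qed.
Lemma precB3 m : prec (B n m) (C m (k3 m)).
Proof. by apply: prec_b3; case: (k_vals m). Qed.

Lemma C_le_next_layer m j y : y <> Bot -> layer y = m -> y <> EA m j ->
  le (C m.+1 j) y.
Proof.
case: y => //= [m' _ ->|m' _ ->|m' i _ ->|m' i _ ->|m' i _ ->|m' i _ ->] yEA.
- have [i ij] := fresh1 j.
  by apply: prec_le_trans (prec_cea s m ij) _; apply/prec_le/prec_eaa.
- by apply: prec_le_trans (prec_ceb s m j j) _; apply/prec_le/prec_ebb.
- have [i' i'i] := fresh1 i.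
  apply: prec_le_trans (prec_ceb s m j i) _.
  by apply: prec_le_trans (prec_ebd s m i'i) _; apply/prec_le/prec_dc; rewrite eq_sym.
- have [i' i'i] := fresh1 i.
  by apply: prec_le_trans (prec_ceb s m j i') _; apply/prec_le/prec_ebd; rewrite eq_sym.
- by apply/prec_le/prec_cea; apply/eqP => eij; apply: yEA; rewrite eij.
- exact/prec_le/prec_ceb.
Qed.

Lemma C_le_lower m j y : y <> Bot -> layer y < m -> y <> EA m.-1 j -> le (C m j) y.
Proof.
elim: m j => [//|m IH] j yB lt yEA.
case: (ltnP (layer y) m) => [ltm|ge]; last by apply: C_le_next_layer => //; lia.
have [i yi] : exists i, y <> EA m.-1 i.
  case: (classic (y = EA m.-1 j)) => [->|]; last by exists j.
  by have [i ij] := fresh1 j; exists i => -[eij]; rewrite eij eqxx in ij.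
apply: le_trans (IH i yB ltm yi); apply: C_le_next_layer => //=; lia.
Qed.

Lemma le_C_same_layer x : x <> Bot -> exists j, le x (C (layer x) j).
Proof.
case: x => //= [m|m|m k|m k|m k|m k] _.
- by exists (k1 m); apply/prec_le/precA1.
- by exists (k1 m); apply/prec_le/precB1.
- by exists k; apply: le_refl.
- by have [j jk] := fresh1 k; exists j; apply/prec_le/prec_dc.
- by exists (k1 m); apply: prec_le_trans (prec_eaa _ _ _) _; apply/prec_le/precA1.
- by exists (k1 m); apply: prec_le_trans (prec_ebb _ _ _) _; apply/prec_le/precB1.
Qed.

Lemma le_C_lower x q : x <> Bot -> q <= layer x -> exists j, le x (C q j).
Proof.
move=> xB; have [j xj] := le_C_same_layer xB.
rewrite leq_eqVlt => /orP [/eqP ->|lt]; first by exists j.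
by exists j; apply: le_trans xj (C_le_lower _ _ _).
Qed.

Definition is_C x := if x is C _ _ then true else false.

Lemma nonC_le_two_C x : x <> Bot -> ~~ is_C x ->
  exists j j', [/\ j != j', le x (C (layer x) j) & le x (C (layer x) j')].
Proof.
case: x => //= [m|m|m k|m k|m k] _ _.
- exists (k1 m), (k2 m); case: (k_vals m) => *; split=> //;
  apply/prec_le; [apply: precA1|apply: precA2].
- exists (k1 m), (k3 m); case: (k_vals m) => *; split=> //;
  apply/prec_le; [apply: precB1|apply: precB3].
- have [b [c /and3P [bk ck bc]]] := fresh_pair k.
  by exists b, c; split=> //; apply/prec_le/prec_dc.
- exists (k1 m), (k2 m); case: (k_vals m) => *; split=> //;
  apply: prec_le_trans (prec_eaa _ _ _) _; apply/prec_le; [apply: precA1|apply: precA2].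
- exists (k1 m), (k3 m); case: (k_vals m) => *; split=> //;
  apply: prec_le_trans (prec_ebb _ _ _) _; apply/prec_le; [apply: precB1|apply: precB3].
Qed.

Lemma nonC_le_lower x y : x <> Bot -> ~~ is_C x -> y <> Bot -> layer y < layer x ->
  le x y.
Proof.
move=> xB xC yB lt; have [j [j' [jj' xj xj']]] := nonC_le_two_C xB xC.
case: (classic (y = EA (layer x).-1 j)) => [yEA|yEA]; last first.
  by apply: le_trans xj (C_le_lower _ _ _).
apply: le_trans xj' (C_le_lower _ _ _) => //; rewrite yEA => -[e].
by rewrite e eqxx in jj'.
Qed.

Lemma le_lower x y : x <> Bot -> y <> Bot -> layer y + 2 <= layer x -> le x y.
Proof.
move=> xB yB lt.
have [j xj] : exists j, le x (C (layer y).+2 j) by apply: le_C_lower => //; lia.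
apply: (le_trans xj); apply: (@le_trans _ (B n (layer y).+1)).
  exact: C_le_lower.
exact: nonC_le_lower.
Qed.

Lemma le_lower_or_EA m y x : y <> Bot -> x <> Bot -> m < layer y -> layer x <= m ->
  le y x \/ exists2 j, y = C m.+1 j & x = EA m j.
Proof.
move=> yB xB ym xm.
case: (leqP (layer x + 2) (layer y)) => [far|near]; first by left; apply: le_lower.
case yC: (is_C y); last by left; apply: nonC_le_lower; rewrite ?yC //; lia.
case: y yB ym near yC => //= m' j _ ym near _; have -> : m' = m.+1 by lia.
case: (classic (x = EA m j)) => [->|xEA]; first by right; exists j.
by left; apply: C_le_lower => //; lia.
Qed.

Lemma prec_A_inv m z : prec (A n m) z -> z = C m (k1 m) \/ z = C m (k2 m).
Proof.
move=> h; inversion h; subst; case: (k_vals m) => v1 v2 _ _ _.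
- by left; congr C; apply: val_inj; rewrite v1.
- by right; congr C; apply: val_inj; rewrite v2.
Qed.

Lemma prec_B_inv m z : prec (B n m) z -> z = C m (k1 m) \/ z = C m (k3 m).
Proof.
move=> h; inversion h; subst; case: (k_vals m) => v1 _ v3 _ _.
- by left; congr C; apply: val_inj; rewrite v1.
- by right; congr C; apply: val_inj; rewrite v3.
Qed.

Lemma prec_D_inv m k z : prec (D m k) z -> exists2 j, j != k & z = C m j.
Proof. by move=> h; inversion h; subst; exists j. Qed.

Lemma prec_EA_inv m k z : prec (EA m k) z -> z = A n m \/ exists2 j, j != k & z = D m j.
Proof. by move=> h; inversion h; subst; [left|right; exists j]. Qed.

Lemma prec_EB_inv m k z : prec (EB m k) z -> z = B n m \/ exists2 j, j != k & z = D m j.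
Proof. by move=> h; inversion h; subst; [left|right; exists j]. Qed.

Definition zigzag q k : P :=
  match q %% 3 with 0 => C (q %/ 3) k | 1 => D (q %/ 3) k | _ => EA (q %/ 3) k end.

Lemma zigzag_C m k : zigzag (3 * m) k = C m k.
Proof.
rewrite /zigzag; have -> : (3 * m) %% 3 = 0 by lia.
by have -> : (3 * m) %/ 3 = m by lia.
Qed.

Lemma zigzag_D m k : zigzag (3 * m + 1) k = D m k.
Proof.
rewrite /zigzag; have -> : (3 * m + 1) %% 3 = 1 by lia.
by have -> : (3 * m + 1) %/ 3 = m by lia.
Qed.

Lemma zigzag_EA m k : zigzag (3 * m + 2) k = EA m k.
Proof.
rewrite /zigzag; have -> : (3 * m + 2) %% 3 = 2 by lia.
by have -> : (3 * m + 2) %/ 3 = m by lia.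
Qed.

Lemma mod3_cases q : exists m, [\/ q = 3 * m, q = 3 * m + 1 | q = 3 * m + 2].
Proof.
exists (q %/ 3).
by case: (ltngtP (q %% 3) 1) => ?; [constructor 1|constructor 3|constructor 2]; lia.
Qed.

Lemma zigzag_step q j k : j != k -> le (zigzag q.+1 k) (zigzag q j).
Proof.
move=> jk; have [m [] ->] := mod3_cases q.
- by rewrite -addn1 zigzag_D zigzag_C; apply/prec_le/prec_dc.
- by rewrite -addn1 -addnA zigzag_EA zigzag_D; apply/prec_le/prec_ead.
- have -> : (3 * m + 2).+1 = 3 * m.+1 by lia.
  by rewrite zigzag_C zigzag_EA; apply/prec_le/prec_cea.
Qed.

Lemma C_swap m k k' x : le (C m k) x ->
  [\/ x = C m k, 0 < m /\ x = EA m.-1 k' | le (C m k') x].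
Proof.
move=> Cx; have CB : C m k <> Bot by [].
have [<-|] := le_level Cx CB; first by constructor 1.
rewrite /level /= => lt; have xB := le_neq_Bot Cx CB.
case: (classic (x = EA m.-1 k')) => [xEA|xEA].
  by constructor 2; split=> //; move: lt; rewrite xEA /=; lia.
by constructor 3; apply: C_le_lower => //; lia.
Qed.

Lemma D_swap m k k' x : le (D m k) x -> [\/ x = D m k, x = C m k' | le (D m k') x].
Proof.
move=> Dx; have DB : D m k <> Bot by [].
have [e|[z Dz zx]] := le_first Dx DB; first by rewrite -e; constructor 1.
have [j jk ez] := prec_D_inv Dz; subst z.
case: (eqVneq j k') => [ejk'|jk']; last first.
  by constructor 3; apply: prec_le_trans (prec_dc _ _ jk') zx.
subst j; have CB : C m k' <> Bot by [].
have [<-|] := le_level zx CB; first by constructor 2.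
rewrite /level /= => lt; constructor 3; apply: nonC_le_lower => //=.
- exact: le_neq_Bot zx CB.
- lia.
Qed.

Lemma EA_swap m k k' x : le (EA m k) x -> [\/ x = EA m k, x = D m k' | le (EA m k') x].
Proof.
move=> EAx; have EAB : EA m k <> Bot by [].
have [e|[z EAz zx]] := le_first EAx EAB; first by rewrite -e; constructor 1.
case: (prec_EA_inv EAz) => [ez|[j jk ez]]; subst z.
  by constructor 3; apply: prec_le_trans (prec_eaa _ _ _) zx.
case: (eqVneq j k') => [ejk'|jk']; last first.
  by constructor 3; apply: prec_le_trans (prec_ead _ _ jk') zx.
subst j; have DB : D m k' <> Bot by [].
have [e|[w Dw wx]] := le_first zx DB; first by rewrite -e; constructor 2.
have [j0 j0k' ew] := prec_D_inv Dw; subst w.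
have [i /andP [ik' ij0]] := fresh2 k' j0.
constructor 3; apply: prec_le_trans (prec_ead s m ik') _.
by apply: prec_le_trans (prec_dc s m _) wx; rewrite eq_sym.
Qed.

Lemma zigzag_swap q k k' x : le (zigzag q k) x ->
  [\/ x = zigzag q k, 0 < q /\ x = zigzag q.-1 k' | le (zigzag q k') x].
Proof.
have [m [] ->] := mod3_cases q.
- rewrite !zigzag_C => /(C_swap k') [->|[m_gt0 ->]|]; try by constructor.
  constructor 2; split; first lia.
  have -> : (3 * m).-1 = 3 * m.-1 + 2 by lia.
  by rewrite zigzag_EA.
- rewrite !zigzag_D => /(D_swap k') [->|->|]; try by constructor.
  constructor 2; split; first lia.
  have -> : (3 * m + 1).-1 = 3 * m by lia.
  by rewrite zigzag_C.
- rewrite !zigzag_EA => /(EA_swap k') [->|->|]; try by constructor.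
  constructor 2; split; first lia.
  have -> : (3 * m + 2).-1 = 3 * m + 1 by lia.
  by rewrite zigzag_D.
Qed.

Lemma zigzag_swap_bisimilar v k k' : k != k' ->
  (forall q, same_colour v (zigzag q k) (zigzag q k')) ->
  forall q, bisimilar le v (zigzag q k) (zigzag q k').
Proof.
move=> kk' col q.
pose twins a b := a = k /\ b = k' \/ a = k' /\ b = k.
have twins_sym a b : twins a b -> twins b a by case=> -[-> ->]; [right|left].
have twins_neq a b : twins a b -> a != b by case=> -[-> ->]; rewrite // eq_sym.
pose Z x y := x = y \/ exists p a b, [/\ twins a b, x = zigzag p a & y = zigzag p b].
exists Z; split; last by right; exists q, k, k'; split=> //; left.
apply: bisimulation_of_sym => x y [->|[p [a [b [ab -> ->]]]]].
- by left.
- by right; exists p, b, a; split=> //; apply: twins_sym.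
- by split=> // x1 yx1; exists x1; split=> //; left.
split; first by case: ab => -[-> ->] i; [|apply: iff_sym]; apply: col.
move=> x1 /(zigzag_swap b) [->|[p_gt0 ->]|bx1].
- by exists (zigzag p b); split; [apply: le_refl|right; exists p, a, b].
- exists (zigzag p.-1 a); split.
    by rewrite -{1}(prednK p_gt0); apply: zigzag_step; apply: twins_neq.
  by right; exists p.-1, b, a; split=> //; apply: twins_sym.
- by exists x1; split=> //; left.
Qed.

Definition zigzag_full (U : P -> Prop) q := forall j, U (zigzag q j).

Local Notation first_gap U := (least_witness (fun q => ~ zigzag_full U q)).

(* Above its first gap an upset meets each zigzag level in at most one point, and
   two levels higher in none. *)
Lemma upset_zigzag_agree U k k' : is_upset s U -> k != k' ->
  (U (zigzag (first_gap U) k) <-> U (zigzag (first_gap U) k')) ->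
  forall q, U (zigzag q k) <-> U (zigzag q k').
Proof.
move=> U_up kk' agree q.
case: (classic (exists q, ~ zigzag_full U q)) => [gap|nogap]; last first.
  have full p : zigzag_full U p by apply: NNPP => nf; apply: nogap; exists p.
  by split=> _; apply: full.
have [/not_all_ex_not [j0 Uj0] gap_min] := least_witnessP gap.
move: (first_gap U) agree Uj0 gap_min => q0 agree Uj0 gap_min.
have down p a j : U (zigzag p.+1 a) -> j != a -> U (zigzag p j).
  by move=> Ua ja; apply: U_up Ua; apply: zigzag_step.
have next_only a : U (zigzag q0.+1 a) -> a = j0.
  by move=> Ua; case: (eqVneq a j0) => // aj0; case: Uj0; apply: down Ua _; rewrite eq_sym.
have none_above d j : ~ U (zigzag (q0.+2 + d) j).
  elim: d j => [|d IH] j Uj.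
    have [b [c /and3P [bj cj bc]]] := fresh_pair j; rewrite addn0 in Uj.
    by move: bc; rewrite (next_only b (down _ _ _ Uj bj)) (next_only c (down _ _ _ Uj cj)) eqxx.
  have [i ij] := fresh1 j; rewrite addnS in Uj; exact: IH i (down _ _ _ Uj ij).
have none_next a b : a != b -> (U (zigzag q0 a) <-> U (zigzag q0 b)) -> ~ U (zigzag q0.+1 a).
  move=> ab Uab Ua; have aj0 := next_only a Ua; subst a.
  by apply/Uj0/Uab; apply: down Ua _; rewrite eq_sym.
case: (ltngtP q q0) => [lt|gt|-> //].
  have full : zigzag_full U q by apply: NNPP => /gap_min; rewrite leqNgt lt.
  by split=> _; apply: full.
case: (eqVneq q q0.+1) => [->|qq0].
  split=> U1; exfalso; first exact: none_next k k' kk' agree U1.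
  by apply: (none_next k' k) U1; [rewrite eq_sym|apply: iff_sym].
have -> : q = q0.+2 + (q - q0.+2) by lia.
by split=> /none_above.
Qed.

Definition colour v x : {ffun 'I_n -> bool} := [ffun g => truth (v g x)].

Lemma colourP v x y : colour v x = colour v y <-> same_colour v x y.
Proof.
split=> [e g|xy]; first by apply/eq_truth; move/ffunP/(_ g): e; rewrite !ffunE.
by apply/ffunP => g; rewrite !ffunE; apply/eq_truth.
Qed.

Lemma exists_zigzag_twins v : (forall g, is_upset s (v g)) ->
  exists k k', k != k' /\ forall q, same_colour v (zigzag q k) (zigzag q k').
Proof.
move=> v_up; pose signature k := [ffun g => truth (v g (zigzag (first_gap (v g)) k))].
have /injectivePn [k [k' kk' same]] : ~~ injectiveb signature.
  apply/injectiveP => /leq_card; rewrite card_ord card_ffun card_bool card_ord.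
  by rewrite leq_exp2l // ltnn.
exists k, k'; split=> // q g; apply: upset_zigzag_agree => //.
by apply/eq_truth; move/ffunP/(_ g): same; rewrite !ffunE.
Qed.

Lemma bisimilar_of_prec v x y : x <> Bot -> y <> Bot -> same_colour v x y ->
  (forall z, prec x z -> exists2 z', le y z' & bisimilar le v z z') ->
  (forall z, prec y z -> exists2 z', le x z' & bisimilar le v z z') ->
  bisimilar le v x y.
Proof.
move=> xB yB xy xsucc ysucc.
have forth a b : a <> Bot -> (forall z, prec a z -> exists2 z', le b z' & bisimilar le v z z') ->
    forall a1, le a a1 -> a1 = a \/ exists2 b1, le b b1 & bisimilar le v a1 b1.
  move=> aB asucc a1 /le_first /(_ aB) [->|[z az za1]]; first by left.
  have [z' bz' zz'] := asucc z az; have [_ zforth _] := bisimilar_bisimulation zz'.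
  have [b1 [z'b1 a1b1]] := zforth a1 za1.
  by right; exists b1 => //; apply: le_trans z'b1.
exists (fun a b => [\/ a = x /\ b = y, a = y /\ b = x | bisimilar le v a b]).
split; last by constructor 1.
apply: bisimulation_of_sym => a b [[-> ->]|[-> ->]|ab].
- by constructor 2.
- by constructor 1.
- by constructor 3; apply: bisimilar_sym.
- split=> // a1 /(forth _ _ xB xsucc) [->|[b1 yb1 a1b1]].
    by exists y; split; [apply: le_refl|constructor 1].
  by exists b1; split=> //; constructor 3.
- split=> [i|a1 /(forth _ _ yB ysucc) [->|[b1 xb1 a1b1]]]; first exact: iff_sym.
    by exists x; split; [apply: le_refl|constructor 2].
  by exists b1; split=> //; constructor 3.
- have [col abforth _] := bisimilar_bisimulation ab; split=> // a1 /abforth [b1 [bb1 a1b1]].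
  by exists b1; split=> //; constructor 3.
Qed.

Lemma A_B_bisimilar v m : bisimilar le v (C m (k2 m)) (C m (k3 m)) ->
  same_colour v (A n m) (B n m) -> bisimilar le v (A n m) (B n m).
Proof.
move=> k2k3 col; apply: bisimilar_of_prec => // z.
- case/prec_A_inv => ->.
    by exists (C m (k1 m)); [apply/prec_le/precB1|apply: bisimilar_refl].
  by exists (C m (k3 m)); first exact/prec_le/precB3.
- case/prec_B_inv => ->.
    by exists (C m (k1 m)); [apply/prec_le/precA1|apply: bisimilar_refl].
  by exists (C m (k2 m)); [apply/prec_le/precA2|apply: bisimilar_sym].
Qed.

Lemma EA_EB_bisimilar v m j : bisimilar le v (A n m) (B n m) ->
  same_colour v (EA m j) (EB m j) -> bisimilar le v (EA m j) (EB m j).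
Proof.
move=> AB col; apply: bisimilar_of_prec => // z.
- case/prec_EA_inv => [->|[i ij ->]]; first by exists (B n m); first exact/prec_le/prec_ebb.
  by exists (D m i); [apply/prec_le/prec_ebd|apply: bisimilar_refl].
- case/prec_EB_inv => [->|[i ij ->]].
    by exists (A n m); [apply/prec_le/prec_eaa|apply: bisimilar_sym].
  by exists (D m i); [apply/prec_le/prec_ead|apply: bisimilar_refl].
Qed.

Definition stable_above v (b : {ffun 'I_n -> bool}) m := forall y y', y <> Bot -> y' <> Bot ->
  m < layer y -> m < layer y' -> colour v y = b -> colour v y' = b -> bisimilar le v y y'.

(* A point of layer > m seen from the colour class again has colour b, lying between
   that class and some C (m + 1) j; a point of layer <= m is seen from every point of the
   class, except EA m j from C (m + 1) j, which sees EB m j ~ EA m j instead. *)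
Lemma stable_above_window v m b : (forall g, is_upset s (v g)) ->
  bisimilar le v (C m (k2 m)) (C m (k3 m)) -> same_colour v (A n m) (B n m) ->
  (forall j, same_colour v (EA m j) (EB m j)) -> (forall j, colour v (C m.+1 j) = b) ->
  stable_above v b m.
Proof.
move=> v_up k2k3 colAB colE colC.
have EAB j := EA_EB_bisimilar (A_B_bisimilar k2k3 colAB) (colE j).
pose region y := [/\ y <> Bot, m < layer y & colour v y = b].
move=> y y' yB y'B ym y'm yb y'b.
exists (fun a a' => region a /\ region a' \/ bisimilar le v a a'); split; last by left.
apply: bisimulation_of_sym => a a' [[ra ra']|aa']; [by left|by right; apply: bisimilar_sym| |].
- case: ra ra' => [aB am ab] [a'B a'm a'b].
  split=> [|x ax]; first by apply/colourP; rewrite ab a'b.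
  have xB := le_neq_Bot ax aB.
  have [xm|mx] := leqP (layer x) m; last first.
    exists a'; split; first exact: le_refl.
    left; split=> //; split=> //; rewrite -ab; apply/colourP => g; split=> [gx|ga].
      have [j xj] := le_C_lower xB mx; have := colC j; rewrite -ab => /colourP/(_ g) <-.
      exact: v_up xj gx.
    exact: v_up ax ga.
  case: (le_lower_or_EA a'B xB a'm xm) => [a'x|[j -> ->]].
    by exists x; split=> //; right; apply: bisimilar_refl.
  by exists (EB m j); split; [apply/prec_le/prec_ceb|right].
- have [col aforth _] := bisimilar_bisimulation aa'; split=> // x /aforth [x' [a'x' xx']].
  by exists x'; split=> //; right.
Qed.

Local Notation T := (size s).

Lemma exists_bisimilar_k2_k3 v : (forall g, is_upset s (v g)) ->
  exists2 r, r < T & forall m, m %% T = r -> bisimilar le v (C m (k2 m)) (C m (k3 m)).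
Proof.
move=> v_up; have [k [k' [kk' col]]] := exists_zigzag_twins v_up.
have [k0 /andP [k0k k0k']] := fresh2 k k'.
have tr_s : (val k0, val k, val k') \in s by rewrite s_enum.2 is_triple_ord // k0k k0k'.
exists (index (val k0, val k, val k') s); first by rewrite index_mem.
move=> m mr; have sel_m : sel s m = (val k0, val k, val k') by rewrite /sel mr nth_index.
case: (k_vals m) => _ v2 v3 _ _.
have -> : k2 m = k by apply: val_inj; rewrite v2 sel_m.
have -> : k3 m = k' by apply: val_inj; rewrite v3 sel_m.
by rewrite -!zigzag_C; apply: zigzag_swap_bisimilar.
Qed.

Lemma stable_above_homogeneous v r x : (forall g, is_upset s (v g)) -> r < T ->
  (forall m, m %% T = r -> bisimilar le v (C m (k2 m)) (C m (k3 m))) ->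
  T + 2 <= layer x ->
  (forall z, z <> Bot -> layer x - 2 - T <= layer z <= layer x - 2 -> colour v z = colour v x) ->
  exists2 m, m < layer x & stable_above v (colour v x) m.
Proof.
move=> v_up rT k2k3 xT hom.
have [m [/andP [lo hi] mr]] := exists_mod_in_window (layer x - 2 - T) rT.
have win z : z <> Bot -> layer z = m \/ layer z = m.+1 -> colour v z = colour v x.
  by move=> zB zm; apply: hom => //; lia.
exists m; first lia.
apply: stable_above_window (k2k3 m mr) _ _ _ => // [|j|j]; last by apply: win => //; right.
- by apply/colourP; rewrite !win //; left.
- by apply/colourP; rewrite !win //; left.
Qed.

Definition frontier v g p :=
  (exists2 z, z <> Bot & p - 2 - T <= layer z /\ v g z) /\
  (forall w, w <> Bot -> p + 2 <= layer w -> ~ v g w).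

Lemma frontier_of_colour_change v g x z : is_upset s (v g) -> x <> Bot -> z <> Bot ->
  layer x - 2 - T <= layer z -> layer z + 2 <= layer x -> ~ (v g z <-> v g x) ->
  frontier v g (layer x).
Proof.
move=> g_up xB zB zlo zhi change.
have gx_gz : v g x -> v g z by apply: g_up; apply: le_lower.
have gz : v g z by apply: NNPP => ngz; apply: change; split=> [/ngz|/gx_gz].
have gx : ~ v g x by move=> gx; apply: change; split=> [_ //|]; exact: gx_gz.
split; first by exists z.
by move=> w wB wx gw; apply/gx/(g_up w) => //; apply: le_lower.
Qed.

Lemma frontier_le v g p p' : frontier v g p -> frontier v g p' -> p <= p' + T + 3.
Proof.
move=> [[z zB [zp gz]] _] [_ none].
by case: (leqP (p' + 2) (layer z)) => [/(none z zB)|]; last lia.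
Qed.

Definition boundary v g : nat := epsilon (inhabits 0) (frontier v g).

Lemma near_boundary v g p : frontier v g p ->
  exists2 d, d < 2 * T + 7 & p = boundary v g - (T + 3) + d.
Proof.
move=> fp; have fb : frontier v g (boundary v g) by apply: epsilon_spec; exists p.
have := frontier_le fp fb; have := frontier_le fb fp.
by exists (p - (boundary v g - (T + 3))); lia.
Qed.

Definition representative v b : P := epsilon (inhabits Bot)
  (fun z => [/\ z <> Bot, least_witness (stable_above v b) < layer z & colour v z = b]).

Lemma bisimilar_representative v x m : x <> Bot -> m < layer x ->
  stable_above v (colour v x) m -> bisimilar le v x (representative v (colour v x)).
Proof.
move=> xB mx st; set b := colour v x.
have [st0 min0] := least_witnessP (ex_intro _ m st).
have [rB rl rb] := epsilon_spec (inhabits Bot)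
  (fun z => [/\ z <> Bot, least_witness (stable_above v b) < layer z & colour v z = b])
  (ex_intro _ x (And3 xB (leq_ltn_trans (min0 _ st) mx) erefl)).
by apply: st0 => //; apply: leq_ltn_trans (min0 _ st) mx.
Qed.

Definition kind : finType := ('I_4 * 'I_K + bool)%type.

Definition point_at l (c : kind) : P :=
  match c with
  | inl (i, k) => match val i with 0 => C l k | 1 => D l k | 2 => EA l k | _ => EB l k end
  | inr b => if b then A n l else B n l
  end.

Lemma point_at_layer x : x <> Bot -> exists c, x = point_at (layer x) c.
Proof.
case: x => //= [m|m|m k|m k|m k|m k] _.
- by exists (inr true).
- by exists (inr false).
- by exists (inl (@Ordinal 4 0 isT, k)).
- by exists (inl (@Ordinal 4 1 isT, k)).
- by exists (inl (@Ordinal 4 2 isT, k)).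
- by exists (inl (@Ordinal 4 3 isT, k)).
Qed.

(* Bisimulation representatives: [Bot], the low layers, the points near the boundary of
   some generator, and one point per colour. *)
Definition cover_index : finType :=
  option ('I_(T + 2) * kind + ('I_n * 'I_(2 * T + 7) * kind + {ffun 'I_n -> bool}))%type.

Definition point_of v (i : cover_index) : P :=
  match i with
  | None => Bot
  | Some (inl (l, c)) => point_at l c
  | Some (inr (inl (g, d, c))) => point_at (boundary v g - (T + 3) + d) c
  | Some (inr (inr b)) => representative v b
  end.

Lemma point_of_cover v : (forall g, is_upset s (v g)) ->
  forall x, exists i, bisimilar le v x (point_of v i).
Proof.
move=> v_up x; case: (classic (x = Bot)) => [->|xB].
  by exists None; apply: bisimilar_refl.
have [c xc] := point_at_layer xB.
have [low|high] := ltnP (layer x) (T + 2).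
  by exists (Some (inl (Ordinal low, c))); rewrite /= -xc; apply: bisimilar_refl.
case: (classic (forall z, z <> Bot -> layer x - 2 - T <= layer z <= layer x - 2 ->
    colour v z = colour v x)) => [hom|].
  have [r rT k2k3] := exists_bisimilar_k2_k3 v_up.
  have [m mx st] := stable_above_homogeneous v_up rT k2k3 high hom.
  by exists (Some (inr (inr (colour v x)))); apply: bisimilar_representative st.
move=> /not_all_ex_not [z /not_all_ex_not [zB /not_all_ex_not [/andP [zlo zhi] zx]]].
have [g change] : exists g, ~ (v g z <-> v g x).
  by apply: not_all_ex_not => same; apply/zx/colourP.
have [|d dT xd] := near_boundary (frontier_of_colour_change (v_up g) xB zB zlo _ change).
  lia.
by exists (Some (inr (inl (g, Ordinal dT, c)))); rewrite /= -xd -xc; apply: bisimilar_refl.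
Qed.

End Abomination.

Lemma eval_heval n k s (v : 'I_k -> pt n -> Prop) (t : hterm k) :
  eval s v t = heval (le s) v t.
Proof. by elim: t => //= t1 -> t2 ->. Qed.

Theorem mainTheorem10 (n : nat) (s : seq (nat * nat * nat)) :
  2 <= n -> enumeration n s -> free_algebra_finite n n s.
Proof.
move=> n_ge2 s_enum; have n_gt0 : 0 < n by apply: leq_trans n_ge2.
pose adm (v : 'I_n -> pt n -> Prop) := forall g, clopen_upset s (v g).
have cover v : adm v ->
    exists r : cover_index n s -> pt n, forall x, exists i, bisimilar (le s) v x (r i).
  by move=> v_adm; eexists; apply: (point_of_cover n_gt0 s_enum) => g; case: (v_adm g).
have [l l_reps] := finite_term_quotient cover.
exists l => t; have [u [ul tu]] := l_reps t.
by exists u; split=> // v v_adm x; rewrite !eval_heval; apply: tu.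
Qed.
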